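(* Let $n\ge1$ and let $\phi_n$ be the basic limit function of $S_n$. Then $$0<\phi_n(-2n+2)<\phi_n(-2n+3)<\cdots<\phi_n(-1)<\phi_n(0),$$ and moreover $$\phi_n(-n)=\frac{n-1}{2n-1}\,\phi_n(0).$$
   Context: For an integer $n\ge1$, the subdivision scheme $S_n$ acts on real sequences $\mathbf f^k=(f^k_i)_{i\in\mathbb Z}$ (the value $f^k_i$ being associated with the dyadic point $2^{-k}i$) by the refinement rules $$f^{k+1}_{2i}=\frac1{2n-1}\sum_{j=-n+1}^{n-1}f^k_{i+j},\qquad f^{k+1}_{2i+1}=\frac1{2n}\sum_{j=-n+1}^{n}f^k_{i+j}.$$ This scheme is convergent: for every bounded initial sequence $\mathbf f^0$ there is a continuous $F:\mathbb R\to\mathbb R$ with $\lim_{k\to\infty}\sup_i|f^k_i-F(2^{-k}i)|=0$. The basic limit function $\phi_n$ is the limit function generated from the initial data $\delta$, where $\delta_0=1$ and $\delta_i=0$ for $i\neq0$. *)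

From Stdlib Require Import Reals ZArith.
Open Scope R_scope.

Fixpoint zsum (a : Z) (len : nat) (f : Z -> R) : R :=
  match len with
  | O => 0
  | S m => f a + zsum (a + 1)%Z m f
  end.

(* One refinement step of S_n:
   f^{k+1}_{2i}   = 1/(2n-1) * sum_{j=-n+1}^{n-1} f^k_{i+j}
   f^{k+1}_{2i+1} = 1/(2n)   * sum_{j=-n+1}^{n}   f^k_{i+j} *)
Definition Sn_step (n : nat) (f : Z -> R) (i : Z) : R :=
  let j := (i / 2)%Z in
  if Z.even i
  then / (2 * INR n - 1) * zsum (j - Z.of_nat n + 1)%Z (2 * n - 1)%nat f
  else / (2 * INR n) * zsum (j - Z.of_nat n + 1)%Z (2 * n)%nat f.

Fixpoint Sn_iter (n : nat) (k : nat) (f : Z -> R) : Z -> R :=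
  match k with
  | O => f
  | S k' => Sn_step n (Sn_iter n k' f)
  end.

Definition delta (i : Z) : R := if Z.eqb i 0 then 1 else 0.

Definition is_limit_function (n : nat) (f0 : Z -> R) (F : R -> R) : Prop :=
  forall eps : R, 0 < eps -> exists K : nat, forall k : nat, (K <= k)%nat ->
    forall i : Z, Rabs (Sn_iter n k f0 i - F (IZR i / 2 ^ k)) <= eps.

Definition is_basic_limit_function (n : nat) (phi : R -> R) : Prop :=
  continuity phi /\ is_limit_function n delta phi.

From Stdlib Require Import Reals ZArith Lia Lra.
Open Scope R_scope.

(* Let a_j be the mask of S_n, equal to c_e = 1/(2n-1) or c_o = 1/(2n) on its even and odd
   support. Passing to the
   limit in S^(k+1) delta = sum_j a_j S^k delta(. - 2^k j) shows that p(m) = phi_n(m) is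
   nonnegative, even, not identically zero, vanishes for |m| >= 2n-1, and satisfies the
   two-scale relation p(m) = sum_j a_j p(2m - j). Comparing the relation at m and m+1 leaves
   only boundary terms: for m < 0, p(m+1) - p(m) = c_e p(2m+2n) + c_o p(2m+2n+1) >= 0, so p
   peaks at 0. The relation also gives p(m) >= c_o p(min(0, 2m+2n-1)), hence p > 0 on
   |m| <= 2n-2, which makes the increments strictly positive. Finally the relations at 0 and
   at -n involve the same even and odd half sums of p; eliminating them gives the value at -n. *)

Lemma Rabs_le_bounds (x e : R) : Rabs x <= e <-> - e <= x <= e.
Proof. unfold Rabs; destruct (Rcase_abs x); split; intros; lra. Qed.

Lemma eq_of_Rabs_sub_le_mul_eps (x y C : R) :
  0 <= C -> (forall eps, 0 < eps -> Rabs (x - y) <= C * eps) -> x = y.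
Proof.
  intros HC H.
  assert (Habs : Rabs (x - y) <= 0).
  { apply Rle_plus_epsilon. intros eps Heps.
    assert (Hle : C * (eps / (C + 1)) <= eps).
    { apply (Rmult_le_reg_r (C + 1)); [lra|].
      replace (C * (eps / (C + 1)) * (C + 1)) with (C * eps) by (field; lra). nra. }
    pose proof (H (eps / (C + 1)) ltac:(apply Rdiv_lt_0_compat; lra)). lra. }
  apply Rabs_le_bounds in Habs. lra.
Qed.

(** * Finite sums over integer ranges *)

Lemma zsum_ext a len f g :
  (forall t, (a <= t < a + Z.of_nat len)%Z -> f t = g t) ->
  zsum a len f = zsum a len g.
Proof.
  revert a; induction len as [|len IH]; intros a H; simpl; [reflexivity|].
  rewrite (H a) by lia. f_equal. apply IH. intros t Ht. apply H. lia.
Qed.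

Lemma zsum_add a len f g :
  zsum a len (fun t => f t + g t) = zsum a len f + zsum a len g.
Proof. revert a; induction len; intros a; simpl; [lra|]. rewrite IHlen; lra. Qed.

Lemma zsum_scal a len c f :
  zsum a len (fun t => c * f t) = c * zsum a len f.
Proof. revert a; induction len; intros a; simpl; [lra|]. rewrite IHlen; lra. Qed.

Lemma zsum_const a len f c :
  (forall t, (a <= t < a + Z.of_nat len)%Z -> f t = c) -> zsum a len f = INR len * c.
Proof.
  revert a; induction len as [|len IH]; intros a H; simpl zsum; [simpl; lra|].
  rewrite S_INR, (H a), IH by (try intros; try apply H; lia). lra.
Qed.

Lemma zsum_eq0 a len f :
  (forall t, (a <= t < a + Z.of_nat len)%Z -> f t = 0) -> zsum a len f = 0.
Proof. intro H. rewrite (zsum_const a len f 0 H). lra. Qed.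

Lemma zsum_ge0 a len f :
  (forall t, (a <= t < a + Z.of_nat len)%Z -> 0 <= f t) -> 0 <= zsum a len f.
Proof.
  revert a; induction len as [|len IH]; intros a H; simpl; [lra|].
  assert (0 <= f a) by (apply H; lia).
  assert (0 <= zsum (a + 1) len f) by (apply IH; intros; apply H; lia). lra.
Qed.

Lemma zsum_term_le a len f t0 :
  (forall t, (a <= t < a + Z.of_nat len)%Z -> 0 <= f t) ->
  (a <= t0 < a + Z.of_nat len)%Z -> f t0 <= zsum a len f.
Proof.
  revert a; induction len as [|len IH]; intros a H Ht; simpl; [lia|].
  destruct (Z.eq_dec t0 a) as [->|Hne].
  - assert (0 <= zsum (a + 1) len f) by (apply zsum_ge0; intros; apply H; lia). lra.
  - assert (0 <= f a) by (apply H; lia).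
    assert (f t0 <= zsum (a + 1) len f) by (apply IH; [intros; apply H; lia | lia]). lra.
Qed.

Lemma zsum_neq0_term a len f : zsum a len f <> 0 -> exists t, f t <> 0.
Proof.
  revert a; induction len as [|len IH]; intros a H; simpl in H; [contradiction|].
  destruct (Req_dec (f a) 0) as [Ha|Ha].
  - apply (IH (a + 1)%Z). lra.
  - exists a. exact Ha.
Qed.

Lemma Rabs_zsum_sub_le a len f g e :
  (forall t, (a <= t < a + Z.of_nat len)%Z -> Rabs (f t - g t) <= e) ->
  Rabs (zsum a len f - zsum a len g) <= INR len * e.
Proof.
  revert a; induction len as [|len IH]; intros a H; simpl zsum.
  - simpl. rewrite Rminus_0_r, Rabs_R0. lra.
  - rewrite S_INR.
    assert (H1 := H a ltac:(lia)).
    assert (H2 : Rabs (zsum (a + 1) len f - zsum (a + 1) len g) <= INR len * e)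
      by (apply IH; intros; apply H; lia).
    apply Rabs_le_bounds in H1, H2. apply Rabs_le_bounds. lra.
Qed.

Lemma zsum_app a l1 l2 f :
  zsum a (l1 + l2) f = zsum a l1 f + zsum (a + Z.of_nat l1) l2 f.
Proof.
  revert a; induction l1 as [|l1 IH]; intros a; simpl.
  - rewrite Z.add_0_r. lra.
  - rewrite IH. replace (a + 1 + Z.of_nat l1)%Z with (a + Z.pos (Pos.of_succ_nat l1))%Z by lia.
    lra.
Qed.

Lemma zsum_last a len f : zsum a (S len) f = zsum a len f + f (a + Z.of_nat len)%Z.
Proof. rewrite <- Nat.add_1_r, zsum_app. simpl. lra. Qed.

Lemma zsum_pred_start a len f :
  zsum (a - 1) (S len) f - zsum a (S len) f = f (a - 1)%Z - f (a + Z.of_nat len)%Z.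
Proof.
  rewrite (zsum_last a). simpl. rewrite Z.sub_add. lra.
Qed.

Lemma zsum_shift a len f c :
  zsum a len (fun t => f (t + c)%Z) = zsum (a + c) len f.
Proof.
  revert a; induction len as [|len IH]; intros a; simpl; [reflexivity|].
  rewrite IH. replace (a + 1 + c)%Z with (a + c + 1)%Z by lia. reflexivity.
Qed.

Lemma zsum_reflect a len f c :
  zsum a len (fun t => f (c - t)%Z) = zsum (c - a - Z.of_nat len + 1) len f.
Proof.
  revert a; induction len as [|len IH]; intros a; [reflexivity|].
  rewrite (zsum_last (c - a - _ + 1)), Nat2Z.inj_succ. simpl zsum. rewrite IH.
  replace (c - (a + 1) - Z.of_nat len + 1)%Z with (c - a - Z.succ (Z.of_nat len) + 1)%Z by lia.
  replace (c - a - Z.succ (Z.of_nat len) + 1 + Z.of_nat len)%Z with (c - a)%Z by lia. lra.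
Qed.

Lemma zsum_comm a l1 b l2 (F : Z -> Z -> R) :
  zsum a l1 (fun u => zsum b l2 (fun t => F u t)) =
  zsum b l2 (fun t => zsum a l1 (fun u => F u t)).
Proof.
  revert a; induction l1 as [|l1 IH]; intros a; simpl.
  - symmetry. apply zsum_eq0. reflexivity.
  - rewrite IH, <- zsum_add. reflexivity.
Qed.

Lemma zsum_centered_odd L h :
  (forall t, h (- t)%Z = h t) ->
  zsum (- Z.of_nat L) (2 * L + 1) h = h 0%Z + 2 * zsum 1 L h.
Proof.
  intro Hh. replace (2 * L + 1)%nat with (L + S L)%nat by lia.
  rewrite zsum_app, Z.add_opp_diag_l. simpl (zsum 0 (S L) h).
  rewrite <- (zsum_ext _ _ (fun t => h (0 - t)%Z)) by (intros; apply Hh).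
  rewrite zsum_reflect. replace (0 - - Z.of_nat L - Z.of_nat L + 1)%Z with 1%Z by lia.
  simpl (0 + 1)%Z. lra.
Qed.

Lemma zsum_centered_even L h :
  (forall t, h (- 1 - t)%Z = h t) ->
  zsum (- Z.of_nat L) (2 * L) h = 2 * zsum 0 L h.
Proof.
  intro Hh. replace (2 * L)%nat with (L + L)%nat by lia.
  rewrite zsum_app, Z.add_opp_diag_l.
  rewrite <- (zsum_ext _ _ (fun t => h (- 1 - t)%Z)) by (intros; apply Hh).
  rewrite zsum_reflect. replace (- 1 - - Z.of_nat L - Z.of_nat L + 1)%Z with 0%Z by lia.
  lra.
Qed.

Lemma zsum_delta a len i :
  (a <= i < a + Z.of_nat len)%Z -> zsum a len (fun t => delta (i - t)%Z) = 1.
Proof.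
  revert a; induction len as [|len IH]; intros a H; simpl; [lia|].
  unfold delta at 1. destruct (Z.eqb_spec (i - a) 0) as [Hia|Hia].
  - rewrite zsum_eq0; [lra|]. intros t Ht. unfold delta.
    destruct (Z.eqb_spec (i - t) 0); [lia|reflexivity].
  - rewrite IH by lia. lra.
Qed.

(** * The two-scale relation at the integers *)

Definition even_weight (n : nat) : R := / (2 * INR n - 1).
Definition odd_weight (n : nat) : R := / (2 * INR n).

(* The right-hand side of phi(m) = sum_j a_j phi(2m - j), where the mask a_j of S_n is
   even_weight n for j = 2t, |t| < n, and odd_weight n for j = 2t + 1, -n <= t < n. *)
Definition refine (n : nat) (g : Z -> R) (m : Z) : R :=
  even_weight n * zsum (1 - Z.of_nat n) (2 * n - 1) (fun t => g (2 * m - 2 * t)%Z)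
  + odd_weight n * zsum (- Z.of_nat n) (2 * n) (fun t => g (2 * m - 2 * t - 1)%Z).

Section Weights.

Variable n : nat.
Hypothesis Hn : (1 <= n)%nat.
Let N := Z.of_nat n.

Lemma INR_ge1 : 1 <= INR n.
Proof. exact (le_INR 1 n Hn). Qed.

Lemma even_weight_pos : 0 < even_weight n.
Proof. pose proof INR_ge1. apply Rinv_0_lt_compat. lra. Qed.

Lemma odd_weight_pos : 0 < odd_weight n.
Proof. pose proof INR_ge1. apply Rinv_0_lt_compat. lra. Qed.

Lemma odd_weight_le_even_weight : odd_weight n <= even_weight n.
Proof. pose proof INR_ge1. apply Rinv_le_contravar; lra. Qed.

Lemma even_weight_mul_len : even_weight n * INR (2 * n - 1) = 1.
Proof.
  pose proof INR_ge1. unfold even_weight.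
  rewrite minus_INR, mult_INR by lia. simpl. field. lra.
Qed.

Lemma odd_weight_mul_len : odd_weight n * INR (2 * n) = 1.
Proof.
  pose proof INR_ge1. unfold odd_weight. rewrite mult_INR. simpl. field. lra.
Qed.

Lemma Rabs_refine_sub_le g h e m :
  (forall l, Rabs (g l - h l) <= e) -> Rabs (refine n g m - refine n h m) <= 2 * e.
Proof.
  intro Hgh. unfold refine.
  pose proof even_weight_pos. pose proof odd_weight_pos.
  assert (Heven := Rabs_zsum_sub_le (1 - N) (2 * n - 1)
    (fun t => g (2 * m - 2 * t)%Z) (fun t => h (2 * m - 2 * t)%Z) e (fun t _ => Hgh _)).
  assert (Hodd := Rabs_zsum_sub_le (- N) (2 * n)
    (fun t => g (2 * m - 2 * t - 1)%Z) (fun t => h (2 * m - 2 * t - 1)%Z) e (fun t _ => Hgh _)).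
  match goal with
  | |- Rabs (?c1 * ?X1 + ?c2 * ?Y1 - (?c1 * ?X2 + ?c2 * ?Y2)) <= _ =>
      replace (c1 * X1 + c2 * Y1 - (c1 * X2 + c2 * Y2))
        with (c1 * (X1 - X2) + c2 * (Y1 - Y2)) by ring
  end.
  eapply Rle_trans; [apply Rabs_triang|].
  rewrite !Rabs_mult, (Rabs_pos_eq (even_weight n)), (Rabs_pos_eq (odd_weight n)) by lra.
  apply (Rmult_le_compat_l (even_weight n)) in Heven; [|lra].
  apply (Rmult_le_compat_l (odd_weight n)) in Hodd; [|lra].
  rewrite <- Rmult_assoc, even_weight_mul_len in Heven.
  rewrite <- Rmult_assoc, odd_weight_mul_len in Hodd. unfold N in *. lra.
Qed.

(* Shifting m by one moves each window by one, so only the boundary terms survive. *)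
Lemma refine_succ_sub g m :
  refine n g (m + 1) - refine n g m =
  even_weight n * (g (2 * m + 2 * N)%Z - g (2 * m - 2 * N + 2)%Z)
  + odd_weight n * (g (2 * m + 2 * N + 1)%Z - g (2 * m - 2 * N + 1)%Z).
Proof.
  set (A := fun t => g (2 * m - 2 * t)%Z).
  set (B := fun t => g (2 * m - 2 * t - 1)%Z).
  assert (DA : zsum (1 - N) (2 * n - 1) (fun t => g (2 * (m + 1) - 2 * t)%Z)
               - zsum (1 - N) (2 * n - 1) A = g (2 * m + 2 * N)%Z - g (2 * m - 2 * N + 2)%Z).
  { rewrite (zsum_ext _ _ _ (fun t => A (t + -1)%Z)) by (intros; unfold A; f_equal; lia).
    rewrite zsum_shift. replace (1 - N + -1)%Z with (1 - N - 1)%Z by lia.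
    replace (2 * n - 1)%nat with (S (2 * n - 2)) by lia.
    rewrite zsum_pred_start. unfold A, N. f_equal; f_equal; lia. }
  assert (DB : zsum (- N) (2 * n) (fun t => g (2 * (m + 1) - 2 * t - 1)%Z)
               - zsum (- N) (2 * n) B = g (2 * m + 2 * N + 1)%Z - g (2 * m - 2 * N + 1)%Z).
  { rewrite (zsum_ext _ _ _ (fun t => B (t + -1)%Z)) by (intros; unfold B; f_equal; lia).
    rewrite zsum_shift. replace (- N + -1)%Z with (- N - 1)%Z by lia.
    replace (2 * n)%nat with (S (2 * n - 1)) by lia.
    rewrite zsum_pred_start. unfold B, N. f_equal; f_equal; lia. }
  unfold refine. fold N A B. rewrite <- DA, <- DB. ring.
Qed.

Lemma refine_ge_term g m l :
  (forall l, 0 <= g l) -> (2 * m - 2 * N + 1 <= l <= 2 * m + 2 * N - 1)%Z ->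
  odd_weight n * g l <= refine n g m.
Proof.
  intros Hg Hl. unfold refine. fold N.
  pose proof even_weight_pos. pose proof odd_weight_pos. pose proof odd_weight_le_even_weight.
  assert (0 <= zsum (1 - N) (2 * n - 1) (fun t => g (2 * m - 2 * t)%Z))
    by (apply zsum_ge0; auto).
  assert (0 <= zsum (- N) (2 * n) (fun t => g (2 * m - 2 * t - 1)%Z))
    by (apply zsum_ge0; auto).
  pose proof (Hg l).
  destruct (Z.Even_or_Odd l) as [[q ->]|[q ->]].
  - assert (g (2 * q)%Z <= zsum (1 - N) (2 * n - 1) (fun t => g (2 * m - 2 * t)%Z)).
    { replace (2 * q)%Z with (2 * m - 2 * (m - q))%Z by lia.
      apply (zsum_term_le _ _ (fun t => g (2 * m - 2 * t)%Z)); auto. unfold N in *; lia. }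
    nra.
  - assert (g (2 * q + 1)%Z <= zsum (- N) (2 * n) (fun t => g (2 * m - 2 * t - 1)%Z)).
    { replace (2 * q + 1)%Z with (2 * m - 2 * (m - q - 1) - 1)%Z by lia.
      apply (zsum_term_le _ _ (fun t => g (2 * m - 2 * t - 1)%Z)); auto. unfold N in *; lia. }
    nra.
Qed.

End Weights.

Section Step.

Variable n : nat.
Let N := Z.of_nat n.

Lemma Sn_step_even g q :
  Sn_step n g (2 * q)%Z = even_weight n * zsum (q - N + 1) (2 * n - 1) g.
Proof.
  unfold Sn_step. rewrite Z.even_even.
  replace (2 * q / 2)%Z with q by (rewrite Z.mul_comm, Z.div_mul; lia). reflexivity.
Qed.

Lemma Sn_step_odd g q :
  Sn_step n g (2 * q + 1)%Z = odd_weight n * zsum (q - N + 1) (2 * n) g.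
Proof.
  unfold Sn_step. rewrite Z.even_odd.
  replace ((2 * q + 1) / 2)%Z with q; [reflexivity|].
  rewrite Z.mul_comm, Z.div_add_l by lia. change (1 / 2)%Z with 0%Z. lia.
Qed.

Lemma Sn_step_ext g h :
  (forall i, g i = h i) -> forall i, Sn_step n g i = Sn_step n h i.
Proof. intros H i. unfold Sn_step. destruct (Z.even i); f_equal; apply zsum_ext; auto. Qed.

Lemma Sn_step_zsum a len (G : Z -> Z -> R) i :
  Sn_step n (fun i => zsum a len (fun j => G j i)) i = zsum a len (fun j => Sn_step n (G j) i).
Proof. unfold Sn_step. destruct (Z.even i); rewrite zsum_comm, <- zsum_scal; reflexivity. Qed.

Lemma Sn_step_add g h i : Sn_step n (fun i => g i + h i) i = Sn_step n g i + Sn_step n h i.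
Proof. unfold Sn_step. destruct (Z.even i); rewrite zsum_add; lra. Qed.

Lemma Sn_step_scal c g i : Sn_step n (fun i => c * g i) i = c * Sn_step n g i.
Proof. unfold Sn_step. destruct (Z.even i); rewrite zsum_scal; lra. Qed.

Lemma Sn_step_shift g d i : Sn_step n (fun i => g (i - d)%Z) i = Sn_step n g (i - 2 * d)%Z.
Proof.
  destruct (Z.Even_or_Odd i) as [[q ->]|[q ->]].
  - replace (2 * q - 2 * d)%Z with (2 * (q - d))%Z by lia.
    rewrite !Sn_step_even, (zsum_ext _ _ _ (fun t => g (t + - d)%Z)) by (intros; f_equal; lia).
    rewrite zsum_shift. do 2 f_equal. lia.
  - replace (2 * q + 1 - 2 * d)%Z with (2 * (q - d) + 1)%Z by lia.
    rewrite !Sn_step_odd, (zsum_ext _ _ _ (fun t => g (t + - d)%Z)) by (intros; f_equal; lia).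
    rewrite zsum_shift. do 2 f_equal. lia.
Qed.

Lemma Sn_step_supp g B :
  (forall i, (B < Z.abs i)%Z -> g i = 0) ->
  forall i, (2 * B + 2 * N - 1 < Z.abs i)%Z -> Sn_step n g i = 0.
Proof.
  intros H i Hi. destruct (Z.Even_or_Odd i) as [[q ->]|[q ->]].
  - rewrite Sn_step_even, zsum_eq0; [lra|]. intros t Ht. apply H. unfold N in *. lia.
  - rewrite Sn_step_odd, zsum_eq0; [lra|]. intros t Ht. apply H. unfold N in *. lia.
Qed.

Hypothesis Hn : (1 <= n)%nat.

Lemma Sn_step_sym g :
  (forall i, g (- i)%Z = g i) -> forall i, Sn_step n g (- i)%Z = Sn_step n g i.
Proof.
  intros H i. destruct (Z.Even_or_Odd i) as [[q ->]|[q ->]].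
  - replace (- (2 * q))%Z with (2 * (- q))%Z by lia. rewrite !Sn_step_even. f_equal.
    rewrite <- (zsum_ext _ _ (fun t => g (0 - t)%Z)) by (intros; rewrite <- H; f_equal; lia).
    rewrite zsum_reflect. f_equal. unfold N. lia.
  - replace (- (2 * q + 1))%Z with (2 * (- q - 1) + 1)%Z by lia. rewrite !Sn_step_odd. f_equal.
    rewrite <- (zsum_ext _ _ (fun t => g (0 - t)%Z)) by (intros; rewrite <- H; f_equal; lia).
    rewrite zsum_reflect. f_equal. unfold N. lia.
Qed.

Lemma Sn_step_ge0 g : (forall i, 0 <= g i) -> forall i, 0 <= Sn_step n g i.
Proof.
  intros H i. destruct (Z.Even_or_Odd i) as [[q ->]|[q ->]].
  - rewrite Sn_step_even. apply Rmult_le_pos.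
    + exact (Rlt_le _ _ (even_weight_pos n Hn)).
    + apply zsum_ge0; auto.
  - rewrite Sn_step_odd. apply Rmult_le_pos.
    + exact (Rlt_le _ _ (odd_weight_pos n Hn)).
    + apply zsum_ge0; auto.
Qed.

Lemma Sn_step_const g c :
  (forall i, (Z.abs i <= 2 * N - 1)%Z -> g i = c) ->
  forall i, (Z.abs i <= 2 * N - 1)%Z -> Sn_step n g i = c.
Proof.
  intros H i Hi. destruct (Z.Even_or_Odd i) as [[q ->]|[q ->]].
  - rewrite Sn_step_even, (zsum_const _ _ _ c), <- Rmult_assoc, even_weight_mul_len by
      (auto || (intros; apply H; unfold N in *; lia)).
    ring.
  - rewrite Sn_step_odd, (zsum_const _ _ _ c), <- Rmult_assoc, odd_weight_mul_len by
      (auto || (intros; apply H; unfold N in *; lia)).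
    ring.
Qed.

Lemma Sn_step_delta i :
  Sn_step n delta i =
  even_weight n * zsum (1 - N) (2 * n - 1) (fun t => delta (i - 2 * t)%Z)
  + odd_weight n * zsum (- N) (2 * n) (fun t => delta (i - (2 * t + 1))%Z).
Proof.
  destruct (Z.Even_or_Odd i) as [[q ->]|[q ->]].
  - rewrite Sn_step_even, (zsum_eq0 (- N)), Rmult_0_r, Rplus_0_r.
    2:{ intros t _. unfold delta. destruct (Z.eqb_spec (2 * q - (2 * t + 1)) 0); [lia|lra]. }
    f_equal.
    rewrite (zsum_ext _ _ (fun t => delta (2 * q - 2 * t)%Z) (fun t => delta (q - t)%Z)).
    2:{ intros t _. unfold delta.
        destruct (Z.eqb_spec (q - t) 0), (Z.eqb_spec (2 * q - 2 * t) 0); lia || reflexivity. }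
    rewrite zsum_reflect. f_equal. unfold N. lia.
  - rewrite Sn_step_odd, (zsum_eq0 (1 - N)), Rmult_0_r, Rplus_0_l.
    2:{ intros t _. unfold delta. destruct (Z.eqb_spec (2 * q + 1 - 2 * t) 0); [lia|lra]. }
    f_equal.
    rewrite (zsum_ext _ _ (fun t => delta (2 * q + 1 - (2 * t + 1))%Z) (fun t => delta (q - t)%Z)).
    2:{ intros t _. unfold delta.
        destruct (Z.eqb_spec (q - t) 0), (Z.eqb_spec (2 * q + 1 - (2 * t + 1)) 0);
          lia || reflexivity. }
    rewrite zsum_reflect. f_equal. unfold N. lia.
Qed.

End Step.

Definition zpow2 (k : nat) : Z := (2 ^ Z.of_nat k)%Z.

Lemma zpow2_S k : zpow2 (S k) = (2 * zpow2 k)%Z.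
Proof. unfold zpow2. rewrite Nat2Z.inj_succ, Z.pow_succ_r by lia. reflexivity. Qed.

Lemma zpow2_ge1 k : (1 <= zpow2 k)%Z.
Proof. induction k; [reflexivity|]. rewrite zpow2_S. lia. Qed.

Lemma IZR_zpow2 k : IZR (zpow2 k) = 2 ^ k.
Proof. unfold zpow2. rewrite <- pow_IZR. reflexivity. Qed.

Section Iterates.

Variable n : nat.
Let N := Z.of_nat n.

Lemma Sn_iter_ext k g h :
  (forall i, g i = h i) -> forall i, Sn_iter n k g i = Sn_iter n k h i.
Proof.
  induction k; intros H i; simpl; auto. apply Sn_step_ext. intros; apply IHk; auto.
Qed.

Lemma Sn_iter_succ k f : Sn_iter n (S k) f = Sn_iter n k (Sn_step n f).
Proof. induction k; simpl; [reflexivity|]. simpl in IHk. rewrite IHk. reflexivity. Qed.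

Lemma Sn_iter_zsum k a len (G : Z -> Z -> R) i :
  Sn_iter n k (fun i => zsum a len (fun j => G j i)) i
  = zsum a len (fun j => Sn_iter n k (G j) i).
Proof.
  revert i; induction k; intros i; simpl; [reflexivity|].
  rewrite (Sn_step_ext _ _ (fun i => zsum a len (fun j => Sn_iter n k (G j) i))) by auto.
  apply Sn_step_zsum.
Qed.

Lemma Sn_iter_add k g h i :
  Sn_iter n k (fun i => g i + h i) i = Sn_iter n k g i + Sn_iter n k h i.
Proof.
  revert i; induction k; intros i; simpl; [reflexivity|].
  rewrite (Sn_step_ext _ _ (fun i => Sn_iter n k g i + Sn_iter n k h i)) by auto.
  apply Sn_step_add.
Qed.

Lemma Sn_iter_scal k c g i : Sn_iter n k (fun i => c * g i) i = c * Sn_iter n k g i.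
Proof.
  revert i; induction k; intros i; simpl; [reflexivity|].
  rewrite (Sn_step_ext _ _ (fun i => c * Sn_iter n k g i)) by auto.
  apply Sn_step_scal.
Qed.

Lemma Sn_iter_shift k g d i :
  Sn_iter n k (fun i => g (i - d)%Z) i = Sn_iter n k g (i - zpow2 k * d)%Z.
Proof.
  revert i; induction k; intros i.
  - cbn [Sn_iter]. change (zpow2 0) with 1%Z. rewrite Z.mul_1_l. reflexivity.
  - simpl. rewrite (Sn_step_ext _ _ (fun i => Sn_iter n k g (i - zpow2 k * d)%Z)) by auto.
    rewrite Sn_step_shift, zpow2_S. f_equal. ring.
Qed.

Definition delta_iter (k : nat) : Z -> R := Sn_iter n k delta.

Hypothesis Hn : (1 <= n)%nat.

(* S^(k+1) delta = S^k (S delta), where S delta is the mask; and S^k sends the unit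
   impulse at j to S^k delta shifted by 2^k j. *)
Lemma delta_iter_succ k i :
  delta_iter (S k) i =
  even_weight n * zsum (1 - N) (2 * n - 1) (fun t => delta_iter k (i - zpow2 k * (2 * t))%Z)
  + odd_weight n * zsum (- N) (2 * n) (fun t => delta_iter k (i - zpow2 k * (2 * t + 1))%Z).
Proof.
  unfold delta_iter. rewrite Sn_iter_succ, (Sn_iter_ext _ _ _ (Sn_step_delta n Hn)).
  rewrite Sn_iter_add, !Sn_iter_scal.
  rewrite (Sn_iter_zsum k (1 - N) (2 * n - 1) (fun t i => delta (i - 2 * t)%Z)).
  rewrite (Sn_iter_zsum k (- N) (2 * n) (fun t i => delta (i - (2 * t + 1))%Z)).
  f_equal; f_equal; apply zsum_ext; intros t _; apply Sn_iter_shift.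
Qed.

Lemma delta_iter_refine k m :
  delta_iter (S k) (zpow2 (S k) * m)%Z = refine n (fun l => delta_iter k (zpow2 k * l)%Z) m.
Proof.
  rewrite delta_iter_succ. unfold refine. fold N. rewrite zpow2_S.
  f_equal; f_equal; apply zsum_ext; intros t _; f_equal; ring.
Qed.

Lemma delta_iter_ge0 k i : 0 <= delta_iter k i.
Proof.
  unfold delta_iter. revert i; induction k; intros i; simpl.
  - unfold delta. destruct (i =? 0)%Z; lra.
  - apply Sn_step_ge0; auto.
Qed.

Lemma delta_iter_sym k i : delta_iter k (- i)%Z = delta_iter k i.
Proof.
  unfold delta_iter. revert i; induction k; intros i; simpl.
  - unfold delta. destruct (Z.eqb_spec (- i) 0), (Z.eqb_spec i 0); lia || reflexivity.
  - apply Sn_step_sym; auto.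
Qed.

Lemma delta_iter_supp k i :
  ((zpow2 k - 1) * (2 * N - 1) < Z.abs i)%Z -> delta_iter k i = 0.
Proof.
  unfold delta_iter. revert i; induction k; intros i Hi; simpl.
  - unfold delta. change (zpow2 0) with 1%Z in Hi.
    destruct (Z.eqb_spec i 0); [lia|reflexivity].
  - apply (Sn_step_supp n _ ((zpow2 k - 1) * (2 * N - 1))%Z); auto.
    rewrite zpow2_S in Hi. fold N. lia.
Qed.

(* Iterating on the indicator of a window shows that the values of f^k on the coarse
   grid 2^k Z sum to one. *)
Lemma delta_iter_partition k :
  zsum (1 - 2 * N) (4 * n - 1) (fun j => delta_iter k (- (zpow2 k * j))%Z) = 1.
Proof.
  set (chi := fun i => zsum (1 - 2 * N) (4 * n - 1) (fun j => delta (i - j)%Z)).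
  assert (Hchi : forall k i, (Z.abs i <= 2 * N - 1)%Z -> Sn_iter n k chi i = 1).
  { induction k0; intros i Hi; simpl.
    - apply zsum_delta. unfold N in *. lia.
    - apply Sn_step_const; auto. }
  rewrite <- (Hchi k 0%Z) by (unfold N; lia). unfold chi.
  rewrite (Sn_iter_zsum k _ _ (fun j i => delta (i - j)%Z)).
  apply zsum_ext. intros t _. rewrite Sn_iter_shift. reflexivity.
Qed.

End Iterates.

(** * The values of the basic limit function at the integers *)

Section LimitAtIntegers.

Variable n : nat.
Hypothesis Hn : (1 <= n)%nat.
Let N := Z.of_nat n.
Variable phi : R -> R.
Hypothesis Hlim : is_limit_function n delta phi.

(* The integer m corresponds to the point 2^-k (2^k m) of the k-th grid. *)
Lemma delta_iter_close_on_integers eps :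
  0 < eps -> exists K, forall k, (K <= k)%nat -> forall m,
    Rabs (delta_iter n k (zpow2 k * m) - phi (IZR m)) <= eps.
Proof.
  intro He. destruct (Hlim eps He) as [K HK]. exists K. intros k Hk m.
  specialize (HK k Hk (zpow2 k * m)%Z).
  replace (IZR m) with (IZR (zpow2 k * m) / 2 ^ k); [exact HK|].
  rewrite mult_IZR, IZR_zpow2. field. apply pow_nonzero. lra.
Qed.

Lemma phi_IZR_ge0 m : 0 <= phi (IZR m).
Proof.
  destruct (Rle_lt_dec 0 (phi (IZR m))) as [|Hlt]; [assumption|]. exfalso.
  destruct (delta_iter_close_on_integers (- phi (IZR m) / 2) ltac:(lra)) as [K HK].
  specialize (HK K (le_n _) m). apply Rabs_le_bounds in HK.
  pose proof (delta_iter_ge0 n Hn K (zpow2 K * m)). lra.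
Qed.

Lemma phi_IZR_supp m : (2 * N - 1 <= Z.abs m)%Z -> phi (IZR m) = 0.
Proof.
  intro Hm. symmetry. apply (eq_of_Rabs_sub_le_mul_eps _ _ 1); [lra|]. intros eps He.
  destruct (delta_iter_close_on_integers eps He) as [K HK]. specialize (HK K (le_n _) m).
  rewrite (delta_iter_supp n Hn K) in HK; [lra|].
  pose proof (zpow2_ge1 K). rewrite Z.abs_mul, (Z.abs_eq (zpow2 K)) by lia. fold N. nia.
Qed.

Lemma phi_IZR_sym m : phi (IZR (- m)) = phi (IZR m).
Proof.
  apply (eq_of_Rabs_sub_le_mul_eps _ _ 2); [lra|]. intros eps He.
  destruct (delta_iter_close_on_integers eps He) as [K HK].
  pose proof (HK K (le_n _) m) as H1. pose proof (HK K (le_n _) (- m)%Z) as H2.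
  replace (zpow2 K * - m)%Z with (- (zpow2 K * m))%Z in H2 by lia.
  rewrite (delta_iter_sym n Hn) in H2.
  apply Rabs_le_bounds in H1, H2. apply Rabs_le_bounds. lra.
Qed.

Lemma phi_IZR_partition :
  zsum (1 - 2 * N) (4 * n - 1) (fun j => phi (IZR (- j))) = 1.
Proof.
  symmetry. apply (eq_of_Rabs_sub_le_mul_eps _ _ (INR (4 * n - 1))); [apply pos_INR|].
  intros eps He. destruct (delta_iter_close_on_integers eps He) as [K HK].
  rewrite <- (delta_iter_partition n Hn K). fold N.
  apply Rabs_zsum_sub_le. intros t _.
  replace (- (zpow2 K * t))%Z with (zpow2 K * - t)%Z by lia. apply HK. lia.
Qed.

Lemma phi_IZR_nonzero : exists l, phi (IZR l) <> 0.
Proof.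
  destruct (zsum_neq0_term _ _ _ ltac:(rewrite phi_IZR_partition; lra)) as [j Hj].
  exists (- j)%Z. exact Hj.
Qed.

Lemma phi_IZR_refine m : phi (IZR m) = refine n (fun l => phi (IZR l)) m.
Proof.
  apply (eq_of_Rabs_sub_le_mul_eps _ _ 3); [lra|]. intros eps He.
  destruct (delta_iter_close_on_integers eps He) as [K HK].
  pose proof (HK (S K) ltac:(lia) m) as Hfine.
  rewrite delta_iter_refine in Hfine by exact Hn.
  pose proof (Rabs_refine_sub_le n Hn _ _ _ m (HK K (le_n _))) as Hcoarse.
  apply Rabs_le_bounds in Hfine, Hcoarse. apply Rabs_le_bounds. lra.
Qed.

End LimitAtIntegers.

(** * Consequences of the two-scale relation *)

Section TwoScaleSolutions.

Variable n : nat.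
Hypothesis Hn : (1 <= n)%nat.
Let N := Z.of_nat n.
Variable p : Z -> R.
Hypothesis p_ge0 : forall l, 0 <= p l.
Hypothesis p_supp : forall l, (2 * N - 1 <= Z.abs l)%Z -> p l = 0.
Hypothesis p_sym : forall l, p (- l)%Z = p l.
Hypothesis p_refine : forall m, p m = refine n p m.

Lemma p_succ_sub m : (m <= -1)%Z ->
  p (m + 1)%Z - p m = even_weight n * p (2 * m + 2 * N)%Z + odd_weight n * p (2 * m + 2 * N + 1)%Z.
Proof.
  intro Hm. rewrite (p_refine (m + 1)), (p_refine m), refine_succ_sub by exact Hn. fold N.
  rewrite (p_supp (2 * m - 2 * N + 2)), (p_supp (2 * m - 2 * N + 1)) by lia. ring.
Qed.

Lemma p_le_succ m : (m <= -1)%Z -> p m <= p (m + 1)%Z.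
Proof.
  intro Hm. pose proof (p_succ_sub m Hm).
  pose proof (even_weight_pos n Hn). pose proof (odd_weight_pos n Hn).
  pose proof (p_ge0 (2 * m + 2 * N)%Z). pose proof (p_ge0 (2 * m + 2 * N + 1)%Z).
  assert (0 <= even_weight n * p (2 * m + 2 * N)%Z) by (apply Rmult_le_pos; lra).
  assert (0 <= odd_weight n * p (2 * m + 2 * N + 1)%Z) by (apply Rmult_le_pos; lra).
  lra.
Qed.

Lemma p_le_p0 l : p l <= p 0%Z.
Proof.
  assert (Hneg : forall d : nat, p (- Z.of_nat d)%Z <= p 0%Z).
  { induction d as [|d IH]; [simpl; lra|].
    pose proof (p_le_succ (- Z.of_nat (S d))%Z ltac:(lia)) as Hstep.
    replace (- Z.of_nat (S d) + 1)%Z with (- Z.of_nat d)%Z in Hstep by lia. lra. }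
  destruct (Z_le_gt_dec l 0).
  - replace l with (- Z.of_nat (Z.to_nat (- l)))%Z by lia. apply Hneg.
  - rewrite <- p_sym. replace (- l)%Z with (- Z.of_nat (Z.to_nat l))%Z by lia. apply Hneg.
Qed.

Hypothesis p_nonzero : exists l, p l <> 0.

Lemma p0_pos : 0 < p 0%Z.
Proof.
  destruct p_nonzero as [l Hl]. pose proof (p_le_p0 l). pose proof (p_ge0 l).
  destruct (Req_dec (p l) 0); [contradiction|lra].
Qed.

(* By the two-scale relation p m >= odd_weight * p l for l = min 0 (2m + 2n - 1), which
   lies strictly between m and 0 as long as m >= 2 - 2n. *)
Lemma p_pos l : (Z.abs l <= 2 * N - 2)%Z -> 0 < p l.
Proof.
  assert (Hneg : forall (d : nat) m, (- Z.of_nat d <= m <= 0)%Z -> (2 - 2 * N <= m)%Z -> 0 < p m).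
  { induction d as [|d IH]; intros m Hm Hm2.
    - replace m with 0%Z by lia. exact p0_pos.
    - destruct (Z.eq_dec m (- Z.of_nat (S d))) as [->|Hne]; [|apply IH; lia].
      set (l' := Z.min 0 (2 * (- Z.of_nat (S d)) + 2 * N - 1)).
      pose proof (refine_ge_term n Hn p (- Z.of_nat (S d)) l' p_ge0 ltac:(unfold l', N in *; lia)) as Hge.
      rewrite <- p_refine in Hge.
      pose proof (IH l' ltac:(unfold l'; lia) ltac:(unfold l'; lia)).
      pose proof (odd_weight_pos n Hn).
      assert (0 < odd_weight n * p l') by (apply Rmult_lt_0_compat; lra). lra. }
  intro Hl. destruct (Z_le_gt_dec l 0).
  - apply (Hneg (Z.to_nat (- l))); lia.
  - rewrite <- p_sym. apply (Hneg (Z.to_nat l)); lia.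
Qed.

Lemma p_lt_succ m : (- 2 * N + 2 <= m < 0)%Z -> p m < p (m + 1)%Z.
Proof.
  intro Hm. pose proof (p_succ_sub m ltac:(lia)).
  pose proof (even_weight_pos n Hn). pose proof (odd_weight_pos n Hn).
  pose proof (p_pos (2 * m + 2 * N)%Z ltac:(lia)).
  pose proof (p_ge0 (2 * m + 2 * N + 1)%Z).
  assert (0 < even_weight n * p (2 * m + 2 * N)%Z) by (apply Rmult_lt_0_compat; lra).
  assert (0 <= odd_weight n * p (2 * m + 2 * N + 1)%Z) by (apply Rmult_le_pos; lra).
  lra.
Qed.

Let even_half := zsum 1 (n - 1) (fun s => p (- (2 * s))%Z).
Let odd_half := zsum 0 n (fun s => p (- (2 * s) - 1)%Z).

Lemma refine_at_neg_N : refine n p (- N) = even_weight n * even_half + odd_weight n * odd_half.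
Proof.
  unfold refine. fold N. f_equal; f_equal.
  - rewrite (zsum_ext _ _ _ (fun t => p (- (2 * (t + N)))%Z)) by (intros; f_equal; lia).
    rewrite (zsum_shift _ _ (fun s => p (- (2 * s))%Z)), Z.sub_add.
    replace (2 * n - 1)%nat with (n - 1 + n)%nat by lia.
    rewrite zsum_app, (zsum_eq0 (1 + _)); [unfold even_half; ring|].
    intros t Ht. apply p_supp. unfold N in *. lia.
  - rewrite (zsum_ext _ _ _ (fun t => p (- (2 * (t + N)) - 1)%Z)) by (intros; f_equal; lia).
    rewrite (zsum_shift _ _ (fun s => p (- (2 * s) - 1)%Z)), Z.add_opp_diag_l.
    replace (2 * n)%nat with (n + n)%nat by lia.
    rewrite zsum_app, (zsum_eq0 (0 + _)); [unfold odd_half; ring|].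
    intros t Ht. apply p_supp. unfold N in *. lia.
Qed.

Lemma refine_at_0 :
  refine n p 0 = even_weight n * (p 0%Z + 2 * even_half) + odd_weight n * (2 * odd_half).
Proof.
  unfold refine. f_equal; f_equal.
  - replace (1 - Z.of_nat n)%Z with (- Z.of_nat (n - 1))%Z by lia.
    replace (2 * n - 1)%nat with (2 * (n - 1) + 1)%nat by lia.
    rewrite zsum_centered_odd by (intros; rewrite <- p_sym; f_equal; lia).
    rewrite (zsum_ext _ _ _ (fun s => p (- (2 * s))%Z)) by (intros; f_equal; lia).
    reflexivity.
  - rewrite zsum_centered_even by (intros; rewrite <- p_sym; f_equal; lia).
    rewrite (zsum_ext _ _ _ (fun s => p (- (2 * s) - 1)%Z)) by (intros; f_equal; lia).
    reflexivity.
Qed.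

Lemma p_at_neg_N : p (- N)%Z = (INR n - 1) / (2 * INR n - 1) * p 0%Z.
Proof.
  pose proof (p_refine 0%Z) as H0. rewrite refine_at_0 in H0.
  rewrite p_refine, refine_at_neg_N.
  replace (even_weight n * even_half + odd_weight n * odd_half)
    with ((1 - even_weight n) * p 0%Z / 2) by lra.
  pose proof (INR_ge1 n Hn). unfold even_weight. field. lra.
Qed.

End TwoScaleSolutions.

Theorem lemma3 (n : nat) (phi : R -> R) :
  (1 <= n)%nat ->
  is_basic_limit_function n phi ->
  (0 < phi (IZR (- 2 * Z.of_nat n + 2)) /\
   (forall j : Z, (- 2 * Z.of_nat n + 2 <= j < 0)%Z ->
      phi (IZR j) < phi (IZR (j + 1)))) /\
  phi (- INR n) = (INR n - 1) / (2 * INR n - 1) * phi 0.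
Proof.
  intros Hn [_ Hlim].
  set (p := fun l : Z => phi (IZR l)).
  pose proof (phi_IZR_ge0 n Hn phi Hlim) as Hge0.
  pose proof (phi_IZR_supp n Hn phi Hlim) as Hsupp.
  pose proof (phi_IZR_sym n Hn phi Hlim) as Hsym.
  pose proof (phi_IZR_refine n Hn phi Hlim) as Href.
  pose proof (phi_IZR_nonzero n Hn phi Hlim) as Hnz.
  split; [split|].
  - apply (p_pos n Hn p Hge0 Hsupp Hsym Href Hnz). lia.
  - exact (p_lt_succ n Hn p Hge0 Hsupp Hsym Href Hnz).
  - pose proof (p_at_neg_N n Hn p Hsupp Hsym Href) as Hval.
    unfold p in Hval. rewrite opp_IZR, <- INR_IZR_INZ in Hval. exact Hval.
Qed.
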